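(* Let $a,b,c\in\mathbb{H}^3$, and let $v_a\in T_a\mathbb{H}^3$ and $v_b\in T_b\mathbb{H}^3$ be unit vectors. Let $\mathcal A$ be the hyperbolic area of the geodesic triangle $(a,b,c)$. Then $$\left\|\Gamma_a^bv_a-v_b\right\|_{T_b\mathbb{H}^3}\le\mathcal A+\left\|\Gamma_a^cv_a-\Gamma_b^cv_b\right\|_{T_c\mathbb{H}^3}.$$
   Context: $\Gamma_p^qv\in T_q\mathbb{H}^3$ denotes the parallel transport of $v\in T_p\mathbb{H}^3$ along the geodesic segment of $\mathbb{H}^3$ from $p$ to $q$. *)

(* Hyperboloid model of H^3 in Minkowski space R^{1,3}. *)
From Stdlib Require Import Reals.
From Coquelicot Require Import Coquelicot.
Open Scope R_scope.

Record V4 := mkV4 { c0 : R; c1 : R; c2 : R; c3 : R }.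

Definition vadd (u w : V4) : V4 :=
  mkV4 (c0 u + c0 w) (c1 u + c1 w) (c2 u + c2 w) (c3 u + c3 w).
Definition vscal (k : R) (u : V4) : V4 :=
  mkV4 (k * c0 u) (k * c1 u) (k * c2 u) (k * c3 u).
Definition vsub (u w : V4) : V4 := vadd u (vscal (-1) w).

Definition mdot (u w : V4) : R :=
  - c0 u * c0 w + c1 u * c1 w + c2 u * c2 w + c3 u * c3 w.

Definition inH3 (p : V4) : Prop := mdot p p = -1 /\ 0 < c0 p.

(* Tangent space T_p H^3 = Minkowski-orthogonal complement of p;
   the Riemannian metric is the restriction of mdot (positive definite there). *)
Definition tangent (p v : V4) : Prop := mdot p v = 0.
Definition tnorm (v : V4) : R := sqrt (mdot v v).

(* Parallel transport along the geodesic segment from p to q (closed form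
   in the hyperboloid model: the boost in span(p,q) fixing its complement). *)
Definition ptransport (p q v : V4) : V4 :=
  vadd v (vscal (mdot q v / (1 - mdot p q)) (vadd p q)).

Definition hnormalize (x : V4) : V4 := vscal (/ sqrt (- mdot x x)) x.

(* Parametrization of the geodesic triangle (a,b,c) over the simplex
   {(s,t) | s,t >= 0, s + t <= 1}: geodesic convex hull in H^3 is the radial
   projection of the Euclidean convex hull of a, b, c. *)
Definition tri_param (a b c : V4) (s t : R) : V4 :=
  hnormalize (vadd (vscal (1 - s - t) a) (vadd (vscal s b) (vscal t c))).

Definition d_s (a b c : V4) (s t : R) : V4 :=
  mkV4 (Derive (fun s' => c0 (tri_param a b c s' t)) s)
       (Derive (fun s' => c1 (tri_param a b c s' t)) s)
       (Derive (fun s' => c2 (tri_param a b c s' t)) s)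
       (Derive (fun s' => c3 (tri_param a b c s' t)) s).

Definition d_t (a b c : V4) (s t : R) : V4 :=
  mkV4 (Derive (fun t' => c0 (tri_param a b c s t')) t)
       (Derive (fun t' => c1 (tri_param a b c s t')) t)
       (Derive (fun t' => c2 (tri_param a b c s t')) t)
       (Derive (fun t' => c3 (tri_param a b c s t')) t).

(* Area element sqrt(det of first fundamental form) w.r.t. the hyperbolic metric. *)
Definition area_density (a b c : V4) (s t : R) : R :=
  let X := d_s a b c s t in
  let Y := d_t a b c s t in
  sqrt (mdot X X * mdot Y Y - (mdot X Y) ^ 2).

Definition tri_area (a b c : V4) : R :=
  RInt (fun s => RInt (fun t => area_density a b c s t) 0 (1 - s)) 0 1.

From Stdlib Require Import Reals Lra.
From Coquelicot Require Import Coquelicot.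
(* last, so that c0 .. c3 are the coordinates of V4 and not Coquelicot's names *)
Open Scope R_scope.

(* Split Γ_a^b v_a - v_b into the holonomy defect Γ_a^b v_a - Γ_c^b Γ_a^c v_a plus
   Γ_c^b (Γ_a^c v_a - Γ_b^c v_b).  Transport is an isometry and Γ_c^b inverts Γ_b^c, so the
   second term has the norm of the right-hand side, and it remains to bound the defect by the area.

   Let p, q, r be the hyperbolic cosines of the sides, D = 1 + 2pqr - p^2 - q^2 - r^2 and
   S = 1 + p + q + r.  A direct computation gives |defect|^2 (S^2 + D) = 4 (D + G), where G <= 0
   is the Gram determinant of (a, b, c, v_a) in R^{1,3}; hence |defect| <= 2 sin θ <= 2 θ with
   tan θ = sqrt D / S.  The area is exactly 2 θ: the area density of the radial parametrisation
   is sqrt D / Q^(3/2) with Q = -<X, X>, its integral in t is elementary, and the result is, as a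
   function of s, minus the derivative of the same closed formula applied to the part s' >= s of
   the triangle. *)

(** * Minkowski space and the hyperboloid *)

Lemma V4_ext (u w : V4) :
  c0 u = c0 w -> c1 u = c1 w -> c2 u = c2 w -> c3 u = c3 w -> u = w.
Proof. destruct u, w; simpl; intros; subst; reflexivity. Qed.

Lemma vsub_split (u w z : V4) : vsub u w = vadd (vsub u z) (vsub z w).
Proof. apply V4_ext; simpl; ring. Qed.

Lemma mdot_sym u w : mdot u w = mdot w u.
Proof. unfold mdot; ring. Qed.

Lemma mdot_add_r u v w : mdot u (vadd v w) = mdot u v + mdot u w.
Proof. unfold mdot; simpl; ring. Qed.

Lemma mdot_add_l u v w : mdot (vadd v w) u = mdot v u + mdot w u.
Proof. unfold mdot; simpl; ring. Qed.

Lemma mdot_scal_r u k w : mdot u (vscal k w) = k * mdot u w.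
Proof. unfold mdot; simpl; ring. Qed.

Lemma mdot_scal_l u k w : mdot (vscal k w) u = k * mdot w u.
Proof. unfold mdot; simpl; ring. Qed.

Ltac mdot_expand :=
  unfold vsub; repeat rewrite ?mdot_add_r, ?mdot_add_l, ?mdot_scal_r, ?mdot_scal_l.

Lemma quadratic_nonneg_discr (A B C : R) :
  0 <= C -> (forall l, 0 <= A - 2 * l * B + l ^ 2 * C) -> B ^ 2 <= A * C.
Proof.
  intros HC Hf.
  destruct (Rle_lt_or_eq_dec 0 C HC) as [Cpos | <-].
  - specialize (Hf (B / C)).
    replace (A - 2 * (B / C) * B + (B / C) ^ 2 * C) with ((A * C - B ^ 2) / C)
      in Hf by (field; lra).
    apply Rmult_le_compat_r with (r := C) in Hf; [|lra].
    unfold Rdiv in Hf; rewrite Rmult_assoc, Rinv_l, Rmult_0_l in Hf; lra.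
  - destruct (Req_dec B 0) as [-> | Bnz]; [lra|].
    specialize (Hf ((A + 1) / (2 * B))).
    replace (A - 2 * ((A + 1) / (2 * B)) * B + ((A + 1) / (2 * B)) ^ 2 * 0)
      with (-1) in Hf by (field; auto).
    lra.
Qed.

Lemma tangent_vsub p u w : tangent p u -> tangent p w -> tangent p (vsub u w).
Proof. unfold tangent; intros Hu Hw; mdot_expand; rewrite Hu, Hw; ring. Qed.

Section Tangent.
Variable p : V4.
Hypothesis Hp : inH3 p.

Lemma tangent_mdot_nonneg u : tangent p u -> 0 <= mdot u u.
Proof.
  destruct p as [p0 p1 p2 p3], u as [u0 u1 u2 u3], Hp as [Hpp Hp0].
  unfold tangent, mdot in *; simpl in *; intros Hpu.
  (* Lagrange's identity for the spatial parts *)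
  assert (E : p0 * p0 * (- u0 * u0 + u1 * u1 + u2 * u2 + u3 * u3) =
     (u1 * u1 + u2 * u2 + u3 * u3)
     + ((p1 * u2 - p2 * u1) ^ 2 + (p1 * u3 - p3 * u1) ^ 2 + (p2 * u3 - p3 * u2) ^ 2)).
  { replace (p0 * p0 * (- u0 * u0 + u1 * u1 + u2 * u2 + u3 * u3)) with
      (p0 * p0 * (u1 * u1 + u2 * u2 + u3 * u3) - (p0 * u0) * (p0 * u0)) by ring.
    replace (p0 * u0) with (p1 * u1 + p2 * u2 + p3 * u3) by lra.
    replace (p0 * p0) with (1 + p1 * p1 + p2 * p2 + p3 * p3) by lra.
    ring. }
  assert (0 < p0 * p0) by nra.
  assert (0 <= p0 * p0 * (- u0 * u0 + u1 * u1 + u2 * u2 + u3 * u3))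
    by (rewrite E; repeat apply Rplus_le_le_0_compat; try apply pow2_ge_0; nra).
  nra.
Qed.

Lemma tangent_cauchy_schwarz u w : tangent p u -> tangent p w ->
  (mdot u w) ^ 2 <= mdot u u * mdot w w.
Proof.
  intros Hu Hw.
  apply quadratic_nonneg_discr; [exact (tangent_mdot_nonneg w Hw)|].
  intros l.
  replace (mdot u u - 2 * l * mdot u w + l ^ 2 * mdot w w)
    with (mdot (vadd u (vscal (- l) w)) (vadd u (vscal (- l) w)))
    by (mdot_expand; rewrite (mdot_sym w u); ring).
  apply tangent_mdot_nonneg.
  unfold tangent in *; mdot_expand; rewrite Hu, Hw; ring.
Qed.

Lemma tnorm_triangle u w : tangent p u -> tangent p w ->
  tnorm (vadd u w) <= tnorm u + tnorm w.
Proof.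
  intros Hu Hw; unfold tnorm.
  pose proof (tangent_cauchy_schwarz u w Hu Hw) as CS.
  pose proof (tangent_mdot_nonneg u Hu) as Hu0.
  pose proof (tangent_mdot_nonneg w Hw) as Hw0.
  assert (Huw : mdot u w <= sqrt (mdot u u) * sqrt (mdot w w)).
  { rewrite <- sqrt_mult by assumption.
    eapply Rle_trans; [apply Rle_abs|].
    rewrite <- sqrt_Rsqr_abs, Rsqr_pow2.
    now apply sqrt_le_1_alt. }
  replace (mdot (vadd u w) (vadd u w)) with (mdot u u + 2 * mdot u w + mdot w w)
    by (mdot_expand; rewrite (mdot_sym w u); ring).
  pose proof (sqrt_sqrt _ Hu0); pose proof (sqrt_sqrt _ Hw0).
  pose proof (sqrt_pos (mdot u u)); pose proof (sqrt_pos (mdot w w)).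
  rewrite <- (sqrt_square (sqrt (mdot u u) + sqrt (mdot w w))) by lra.
  apply sqrt_le_1_alt; nra.
Qed.
End Tangent.

Lemma H3_mdot_neg a b : inH3 a -> inH3 b -> mdot a b < 0.
Proof.
  destruct a as [a0 a1 a2 a3], b as [b0 b1 b2 b3]; unfold inH3, mdot; simpl.
  intros [Ha Ha0] [Hb Hb0].
  assert (Lagrange : (a1 * a1 + a2 * a2 + a3 * a3) * (b1 * b1 + b2 * b2 + b3 * b3)
     - (a1 * b1 + a2 * b2 + a3 * b3) ^ 2
     = (a1 * b2 - a2 * b1) ^ 2 + (a1 * b3 - a3 * b1) ^ 2 + (a2 * b3 - a3 * b2) ^ 2)
    by ring.
  assert (0 <= (a1 * b2 - a2 * b1) ^ 2 + (a1 * b3 - a3 * b1) ^ 2 + (a2 * b3 - a3 * b2) ^ 2)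
    by (repeat apply Rplus_le_le_0_compat; apply pow2_ge_0).
  assert ((a1 * b1 + a2 * b2 + a3 * b3) ^ 2 < (a0 * b0) ^ 2) by nra.
  assert (0 < a0 * b0) by nra.
  nra.
Qed.

Lemma H3_neg_mdot_ge1 a b : inH3 a -> inH3 b -> 1 <= - mdot a b.
Proof.
  intros Ha Hb.
  pose proof (H3_mdot_neg a b Ha Hb).
  destruct Ha as [Haa Ha0], Hb as [Hbb Hb0].
  set (u := vadd b (vscal (mdot a b) a)).
  assert (Hu : tangent a u) by (unfold tangent, u; mdot_expand; rewrite Haa; ring).
  assert (mdot u u = mdot a b ^ 2 - 1)
    by (unfold u; mdot_expand; rewrite Haa, Hbb, (mdot_sym b a); ring).
  pose proof (tangent_mdot_nonneg a (conj Haa Ha0) u Hu).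
  nra.
Qed.

(** * Parallel transport *)

Section Transport.
Variables p q : V4.
Hypotheses (Hp : inH3 p) (Hq : inH3 q).

Let transport_denom_pos : 0 < 1 - mdot p q.
Proof. pose proof (H3_neg_mdot_ge1 p q Hp Hq); lra. Qed.

Lemma ptransport_tangent v : tangent q (ptransport p q v).
Proof.
  pose proof transport_denom_pos; destruct Hq as [Hqq _].
  unfold tangent, ptransport; mdot_expand.
  rewrite Hqq, (mdot_sym q p); field; lra.
Qed.

Lemma ptransport_vsub u w :
  ptransport p q (vsub u w) = vsub (ptransport p q u) (ptransport p q w).
Proof. apply V4_ext; unfold ptransport, mdot; simpl; unfold Rdiv; ring. Qed.

Lemma ptransport_isometry u w : tangent p u -> tangent p w ->
  mdot (ptransport p q u) (ptransport p q w) = mdot u w.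
Proof.
  unfold tangent; intros Hu Hw.
  pose proof transport_denom_pos; destruct Hp as [Hpp _], Hq as [Hqq _].
  unfold ptransport; mdot_expand.
  rewrite ?(mdot_sym u p), ?(mdot_sym w p), ?(mdot_sym u q), ?(mdot_sym w q),
    ?(mdot_sym q p), ?(mdot_sym w u).
  rewrite Hpp, Hqq, Hu, Hw; field; lra.
Qed.

Lemma ptransport_inverse v : tangent p v -> ptransport q p (ptransport p q v) = v.
Proof.
  unfold tangent; intros Hv.
  pose proof transport_denom_pos; destruct Hp as [Hpp _].
  assert (Hcoef : mdot p (ptransport p q v) / (1 - mdot q p)
                  = - (mdot q v / (1 - mdot p q))).
  { unfold ptransport; mdot_expand; rewrite Hpp, Hv, (mdot_sym q p); field; lra. }
  unfold ptransport at 1; rewrite Hcoef.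
  apply V4_ext; unfold ptransport; simpl; ring.
Qed.

Lemma tnorm_ptransport u : tangent p u -> tnorm (ptransport p q u) = tnorm u.
Proof. intros Hu; unfold tnorm; rewrite ptransport_isometry; auto. Qed.
End Transport.

Definition det3 (a11 a12 a13 a21 a22 a23 a31 a32 a33 : R) : R :=
  a11 * (a22 * a33 - a23 * a32) - a12 * (a21 * a33 - a23 * a31)
  + a13 * (a21 * a32 - a22 * a31).

Definition det4 (a11 a12 a13 a14 a21 a22 a23 a24 a31 a32 a33 a34 a41 a42 a43 a44 : R) : R :=
  a11 * det3 a22 a23 a24 a32 a33 a34 a42 a43 a44
  - a12 * det3 a21 a23 a24 a31 a33 a34 a41 a43 a44
  + a13 * det3 a21 a22 a24 a31 a32 a34 a41 a42 a44
  - a14 * det3 a21 a22 a23 a31 a32 a33 a41 a42 a43.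

Definition gram3 (e1 e2 e3 : V4) : R :=
  det3 (mdot e1 e1) (mdot e1 e2) (mdot e1 e3)
       (mdot e2 e1) (mdot e2 e2) (mdot e2 e3)
       (mdot e3 e1) (mdot e3 e2) (mdot e3 e3).

Definition gram4 (e1 e2 e3 e4 : V4) : R :=
  det4 (mdot e1 e1) (mdot e1 e2) (mdot e1 e3) (mdot e1 e4)
       (mdot e2 e1) (mdot e2 e2) (mdot e2 e3) (mdot e2 e4)
       (mdot e3 e1) (mdot e3 e2) (mdot e3 e3) (mdot e3 e4)
       (mdot e4 e1) (mdot e4 e2) (mdot e4 e3) (mdot e4 e4).

(* Cauchy-Binet: the Gram matrix is E J E^T with J = diag(-1,1,1,1), det J = -1. *)
Lemma gram4_nonpos (e1 e2 e3 e4 : V4) : gram4 e1 e2 e3 e4 <= 0.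
Proof.
  assert (CB : exists d, gram4 e1 e2 e3 e4 = - d ^ 2).
  { exists (det4 (c0 e1) (c1 e1) (c2 e1) (c3 e1) (c0 e2) (c1 e2) (c2 e2) (c3 e2)
                 (c0 e3) (c1 e3) (c2 e3) (c3 e3) (c0 e4) (c1 e4) (c2 e4) (c3 e4)).
    destruct e1, e2, e3, e4; unfold gram4, det4, det3, mdot; simpl; ring. }
  destruct CB as [d ->]; pose proof (pow2_ge_0 d); lra.
Qed.

(* For p, q, r the hyperbolic cosines of the sides, this is minus the Gram
   determinant of the vertices. *)
Definition cosh_gram (p q r : R) : R := det3 1 p r p 1 q r q 1.

Lemma atan_nonneg t : 0 <= t -> 0 <= atan t.
Proof.
  intros Ht; rewrite <- atan_0.
  destruct (Rle_lt_or_eq_dec 0 t Ht) as [Htpos | <-]; [left; now apply atan_increasing | lra].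
Qed.

Lemma Rsqr_sin_atan_le t : 0 <= t -> t ^ 2 / (1 + t ^ 2) <= atan t ^ 2.
Proof.
  intros Ht; destruct (Rle_lt_or_eq_dec 0 t Ht) as [Htpos | <-].
  - assert (Hatan : 0 < atan t) by (rewrite <- atan_0; apply atan_increasing; lra).
    pose proof (sin_lt_x _ Hatan) as Hsin; rewrite sin_atan in Hsin.
    assert (Hsq : 0 < sqrt (1 + t²)) by (apply sqrt_lt_R0; unfold Rsqr; nra).
    assert (0 < t / sqrt (1 + t²)) by (apply Rdiv_lt_0_compat; lra).
    replace (t ^ 2 / (1 + t ^ 2)) with ((t / sqrt (1 + t²)) ^ 2).
    + nra.
    + unfold Rdiv; rewrite Rpow_mult_distr, pow_inv, <- (Rsqr_pow2 (sqrt _)), Rsqr_sqrt;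
        unfold Rsqr; [now replace (t * t) with (t ^ 2) by ring | nra].
  - rewrite atan_0; unfold Rdiv; nra.
Qed.

(** * The area integral *)

Definition quad_antideriv (al be ga w t : R) : R :=
  2 * w * (2 * al * t + be) / ((4 * al * ga - be ^ 2) * sqrt (al * t ^ 2 + be * t + ga)).

Lemma is_derive_quad_antideriv al be ga w t :
  0 < al * t ^ 2 + be * t + ga -> 4 * al * ga - be ^ 2 <> 0 ->
  is_derive (quad_antideriv al be ga w) t (w / sqrt (al * t ^ 2 + be * t + ga) ^ 3).
Proof.
  intros HQ Hdisc; unfold quad_antideriv.
  assert (Hn : 0 < sqrt (al * t ^ 2 + be * t + ga)) by (apply sqrt_lt_R0; lra).
  assert (Hnn : sqrt (al * t ^ 2 + be * t + ga) * sqrt (al * t ^ 2 + be * t + ga)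
                = al * t ^ 2 + be * t + ga) by (apply sqrt_sqrt; lra).
  auto_derive;
    replace (al * (t * (t * 1)) + be * t + ga) with (al * t ^ 2 + be * t + ga) by ring;
    replace (be * (be * 1)) with (be ^ 2) by ring.
  - repeat split; [lra | apply Rmult_integral_contrapositive_currified; lra].
  - set (n := sqrt (al * t ^ 2 + be * t + ga)) in *; clearbody n.
    replace ga with (n * n - al * t ^ 2 - be * t) by lra.
    field; split; [lra|].
    rewrite Hnn; replace (al * t ^ 2 + be * t + ga - al * t ^ 2 - be * t) with ga by ring.
    exact Hdisc.
Qed.

Definition tri_quad (p q r s t : R) : R :=
  (1 - s - t) ^ 2 + s ^ 2 + t ^ 2
  + 2 * p * (1 - s - t) * s + 2 * r * (1 - s - t) * t + 2 * q * s * t.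

Definition quad_ab (p s : R) : R := (1 - s) ^ 2 + s ^ 2 + 2 * p * (1 - s) * s.
Definition quad_bc (q s : R) : R := s ^ 2 + (1 - s) ^ 2 + 2 * q * s * (1 - s).

Definition subtri_denom (p q r s : R) : R :=
  sqrt (quad_ab p s) * sqrt (quad_bc q s) + sqrt (quad_bc q s) * ((1 - s) * p + s)
  + sqrt (quad_ab p s) * (s + (1 - s) * q)
  + ((1 - s) * s * p + (1 - s) ^ 2 * r + s ^ 2 + s * (1 - s) * q).

(* The closed area formula for the triangle with vertices b, X(s,0), X(s,1-s), with w standing for
   sqrt D: once these points are normalised, 1 + p' + q' + r' and sqrt D' are subtri_denom and
   (1 - s)^2 sqrt D, both divided by sqrt (quad_ab p s) * sqrt (quad_bc q s). *)
Definition subtri_area (p q r w s : R) : R :=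
  2 * atan ((1 - s) ^ 2 * w / subtri_denom p q r s).

Lemma subtri_area_endpoints p q r w :
  subtri_area p q r w 1 = 0 /\ subtri_area p q r w 0 = 2 * atan (w / (1 + p + q + r)).
Proof.
  unfold subtri_area, subtri_denom, quad_ab, quad_bc; split.
  - replace ((1 - 1) ^ 2 * w) with 0 by ring.
    unfold Rdiv; rewrite Rmult_0_l, atan_0; ring.
  - replace ((1 - 0) ^ 2 + 0 ^ 2 + 2 * p * (1 - 0) * 0) with 1 by ring.
    replace (0 ^ 2 + (1 - 0) ^ 2 + 2 * q * 0 * (1 - 0)) with 1 by ring.
    rewrite sqrt_1; unfold Rdiv; do 2 f_equal; f_equal; [ring | f_equal; ring].
Qed.

Definition subtri_denom_deriv (p q r s : R) : R :=
  let u := sqrt (quad_ab p s) in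
  let v := sqrt (quad_bc q s) in
  let du := (- 2 * (1 - s) + 2 * s + 2 * p * (1 - 2 * s)) / (2 * u) in
  let dv := (2 * s - 2 * (1 - s) + 2 * q * (1 - 2 * s)) / (2 * v) in
  du * v + u * dv + dv * ((1 - s) * p + s) + v * (1 - p)
  + du * (s + (1 - s) * q) + u * (1 - q)
  + ((1 - 2 * s) * p - 2 * (1 - s) * r + 2 * s + (1 - 2 * s) * q).

Definition subtri_area_deriv (p q r w s : R) : R :=
  2 * (- 2 * (1 - s) * w * subtri_denom p q r s
       - (1 - s) ^ 2 * w * subtri_denom_deriv p q r s)
  / (subtri_denom p q r s ^ 2 + (1 - s) ^ 4 * w ^ 2).

Definition slice_coef (p q r s : R) : R :=
  - 2 * (1 - s) - 2 * p * s + 2 * r * (1 - s) + 2 * q * s.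

Definition slice_discr (p q r s : R) : R :=
  4 * (2 - 2 * r) * quad_ab p s - slice_coef p q r s ^ 2.

Definition slice_integral (p q r w s : R) : R :=
  quad_antideriv (2 - 2 * r) (slice_coef p q r s) (quad_ab p s) w (1 - s)
  - quad_antideriv (2 - 2 * r) (slice_coef p q r s) (quad_ab p s) w 0.

Lemma tri_quad_slice p q r s t :
  tri_quad p q r s t = (2 - 2 * r) * t ^ 2 + slice_coef p q r s * t + quad_ab p s.
Proof. unfold tri_quad, slice_coef, quad_ab; ring. Qed.

Lemma slice_integral_eq p q r w s : 0 < s < 1 -> w ^ 2 = cosh_gram p q r ->
  0 < quad_ab p s -> 0 < quad_bc q s ->
  subtri_denom p q r s ^ 2 + (1 - s) ^ 4 * w ^ 2 <> 0 -> slice_discr p q r s <> 0 ->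
  slice_integral p q r w s = - subtri_area_deriv p q r w s.
Proof.
  intros Hs Hw Hab Hbc Hden Hdisc; symmetry.
  unfold slice_integral, quad_antideriv.
  rewrite <- !tri_quad_slice.
  replace (tri_quad p q r s (1 - s)) with (quad_bc q s) by (unfold tri_quad, quad_bc; ring).
  replace (tri_quad p q r s 0) with (quad_ab p s) by (unfold tri_quad, quad_ab; ring).
  fold (slice_discr p q r s).
  unfold subtri_area_deriv, subtri_denom_deriv, subtri_denom in *; cbv zeta.
  rewrite Hw in *.
  assert (Hu : sqrt (quad_ab p s) * sqrt (quad_ab p s) = quad_ab p s) by (apply sqrt_sqrt; lra).
  assert (Hv : sqrt (quad_bc q s) * sqrt (quad_bc q s) = quad_bc q s) by (apply sqrt_sqrt; lra).
  assert (0 < sqrt (quad_ab p s)) by (apply sqrt_lt_R0; lra).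
  assert (0 < sqrt (quad_bc q s)) by (apply sqrt_lt_R0; lra).
  set (u := sqrt (quad_ab p s)) in *; set (v := sqrt (quad_bc q s)) in *; clearbody u v.
  (* in terms of u and v the identity becomes rational *)
  assert (Ep : p = (u * u - (1 - s) ^ 2 - s ^ 2) / (2 * (1 - s) * s))
    by (rewrite Hu; unfold quad_ab; field; lra).
  assert (Eq : q = (v * v - (1 - s) ^ 2 - s ^ 2) / (2 * (1 - s) * s))
    by (rewrite Hv; unfold quad_bc; field; lra).
  unfold slice_discr, cosh_gram, det3, slice_coef, quad_ab, quad_bc in *.
  subst p q.
  field.
  repeat split; try lra.
  - intros Hzero; apply Hdisc, (Rmult_eq_reg_r ((1 - s) ^ 2));
      [rewrite Rmult_0_l, <- Hzero; field; lra | apply pow_nonzero; lra].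
  - intros Hzero; apply Hden, (Rmult_eq_reg_r (16 * s ^ 2));
      [rewrite Rmult_0_l, <- Hzero; field; lra | apply Rmult_integral_contrapositive_currified;
        [lra | apply pow_nonzero; lra]].
Qed.

Lemma is_derive_subtri_area p q r w s :
  0 < quad_ab p s -> 0 < quad_bc q s -> 0 < subtri_denom p q r s ->
  is_derive (subtri_area p q r w) s (subtri_area_deriv p q r w s).
Proof.
  intros Hab Hbc Hden.
  unfold subtri_area, subtri_area_deriv, subtri_denom_deriv, subtri_denom, quad_ab, quad_bc in *.
  cbv zeta.
  auto_derive;
    replace ((1 + - s) * ((1 + - s) * 1) + s * (s * 1) + 2 * p * (1 + - s) * s)
      with ((1 - s) ^ 2 + s ^ 2 + 2 * p * (1 - s) * s) by ring;
    replace (s * (s * 1) + (1 + - s) * ((1 + - s) * 1) + 2 * q * s * (1 + - s))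
      with (s ^ 2 + (1 - s) ^ 2 + 2 * q * s * (1 - s)) by ring.
  - repeat split; lra.
  - assert (0 < sqrt ((1 - s) ^ 2 + s ^ 2 + 2 * p * (1 - s) * s)) by (apply sqrt_lt_R0; lra).
    assert (0 < sqrt (s ^ 2 + (1 - s) ^ 2 + 2 * q * s * (1 - s))) by (apply sqrt_lt_R0; lra).
    set (u := sqrt ((1 - s) ^ 2 + s ^ 2 + 2 * p * (1 - s) * s)) in *.
    set (v := sqrt (s ^ 2 + (1 - s) ^ 2 + 2 * q * s * (1 - s))) in *.
    clearbody u v.
    field; repeat split; try lra.
    apply Rgt_not_eq, Rplus_lt_le_0_compat; [now apply pow_lt|].
    replace ((1 - s) ^ 4 * w ^ 2) with (((1 - s) ^ 2 * w) ^ 2) by ring; apply pow2_ge_0.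
Qed.

Lemma continuous_subtri_area_deriv p q r w s :
  0 < quad_ab p s -> 0 < quad_bc q s -> 0 < subtri_denom p q r s ->
  continuous (subtri_area_deriv p q r w) s.
Proof.
  intros Hab Hbc Hden.
  apply (@ex_derive_continuous R_AbsRing R_NormedModule).
  unfold subtri_area_deriv, subtri_denom_deriv, subtri_denom, quad_ab, quad_bc in *.
  cbv zeta.
  auto_derive;
    replace ((1 + - s) * ((1 + - s) * 1) + s * (s * 1) + 2 * p * (1 + - s) * s)
      with ((1 - s) ^ 2 + s ^ 2 + 2 * p * (1 - s) * s) by ring;
    replace (s * (s * 1) + (1 + - s) * ((1 + - s) * 1) + 2 * q * s * (1 + - s))
      with (s ^ 2 + (1 - s) ^ 2 + 2 * q * s * (1 - s)) by ring.
  assert (0 < sqrt ((1 - s) ^ 2 + s ^ 2 + 2 * p * (1 - s) * s)) by (apply sqrt_lt_R0; lra).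
  assert (0 < sqrt (s ^ 2 + (1 - s) ^ 2 + 2 * q * s * (1 - s))) by (apply sqrt_lt_R0; lra).
  set (u := sqrt ((1 - s) ^ 2 + s ^ 2 + 2 * p * (1 - s) * s)) in *.
  set (v := sqrt (s ^ 2 + (1 - s) ^ 2 + 2 * q * s * (1 - s))) in *.
  clearbody u v.
  repeat split; try lra.
  match goal with |- ?X * (?X * 1) + ?Y <> 0 =>
    assert (0 < X) by lra;
    replace Y with (((1 - s) ^ 2 * w) ^ 2) by ring end.
  apply Rgt_not_eq, Rplus_lt_le_0_compat; [nra | apply pow2_ge_0].
Qed.

Section SliceIntegrals.
Variables p q r : R.
Hypotheses (Hp : 1 <= p) (Hq : 1 <= q) (Hr : 1 <= r).

Lemma tri_quad_ge1 s t : 0 <= s -> 0 <= t -> s + t <= 1 -> 1 <= tri_quad p q r s t.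
Proof.
  intros Hs Ht Hst; unfold tri_quad.
  assert (0 <= (p - 1) * ((1 - s - t) * s)) by (apply Rmult_le_pos; nra).
  assert (0 <= (r - 1) * ((1 - s - t) * t)) by (apply Rmult_le_pos; nra).
  assert (0 <= (q - 1) * (s * t)) by (apply Rmult_le_pos; nra).
  nra.
Qed.

Lemma quad_ab_pos s : 0 <= s <= 1 -> 0 < quad_ab p s.
Proof.
  intros Hs; replace (quad_ab p s) with (tri_quad p q r s 0) by (unfold tri_quad, quad_ab; ring).
  pose proof (tri_quad_ge1 s 0); lra.
Qed.

Lemma quad_bc_pos s : 0 <= s <= 1 -> 0 < quad_bc q s.
Proof.
  intros Hs; replace (quad_bc q s) with (tri_quad p q r s (1 - s))
    by (unfold tri_quad, quad_bc; ring).
  pose proof (tri_quad_ge1 s (1 - s)); lra.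
Qed.

Lemma subtri_denom_pos s : 0 <= s <= 1 -> 0 < subtri_denom p q r s.
Proof.
  intros Hs; unfold subtri_denom.
  assert (0 < sqrt (quad_ab p s)) by (apply sqrt_lt_R0, quad_ab_pos; lra).
  assert (0 < sqrt (quad_bc q s)) by (apply sqrt_lt_R0, quad_bc_pos; lra).
  assert (0 <= sqrt (quad_bc q s) * ((1 - s) * p + s)) by (apply Rmult_le_pos; nra).
  assert (0 <= sqrt (quad_ab p s) * (s + (1 - s) * q)) by (apply Rmult_le_pos; nra).
  assert (0 <= (1 - s) * s * p) by (apply Rmult_le_pos; nra).
  assert (0 <= s * (1 - s) * q) by (apply Rmult_le_pos; nra).
  assert (0 <= (1 - s) ^ 2 * r) by (apply Rmult_le_pos; nra).
  nra.
Qed.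

Lemma slice_discr_neq0 s : 0 <= s < 1 -> 0 < cosh_gram p q r -> slice_discr p q r s <> 0.
Proof.
  intros Hs HD Hdisc.
  pose proof (quad_ab_pos s ltac:(lra)) as Hab.
  set (m := (1 - s) * p + s).
  set (z := - quad_ab p s * (p - q) + m * ((1 - s) * (1 - r) + s * (p - q))).
  assert (E : quad_ab p s * (1 - s) ^ 2 * cosh_gram p q r
              = slice_discr p q r s / 4 * (quad_ab p s - m ^ 2) - z ^ 2)
    by (unfold z, m, slice_discr, slice_coef, cosh_gram, det3, quad_ab; field).
  rewrite Hdisc in E.
  assert (0 < quad_ab p s * (1 - s) ^ 2 * cosh_gram p q r).
  { apply Rmult_lt_0_compat; [apply Rmult_lt_0_compat; [lra | apply pow_lt; lra] | lra]. }
  pose proof (pow2_ge_0 z).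
  lra.
Qed.

Lemma is_RInt_slice w s : 0 < s < 1 -> 0 < cosh_gram p q r ->
  is_RInt (fun t => w / sqrt (tri_quad p q r s t) ^ 3) 0 (1 - s) (slice_integral p q r w s).
Proof.
  intros Hs HD.
  apply (@is_RInt_derive R_CompleteNormedModule
    (quad_antideriv (2 - 2 * r) (slice_coef p q r s) (quad_ab p s) w));
    rewrite Rmin_left, Rmax_right by lra; intros t Ht;
    pose proof (tri_quad_ge1 s t ltac:(lra) ltac:(lra) ltac:(lra)) as HQ.
  - rewrite tri_quad_slice in HQ |- *.
    apply is_derive_quad_antideriv; [lra | now apply slice_discr_neq0; [lra|]].
  - apply (@ex_derive_continuous R_AbsRing R_NormedModule).
    unfold tri_quad in *; auto_derive.
    replace ((1 - s + - t) * ((1 - s + - t) * 1) + s * (s * 1) + t * (t * 1)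
      + 2 * p * (1 - s + - t) * s + 2 * r * (1 - s + - t) * t + 2 * q * s * t)
      with ((1 - s - t) ^ 2 + s ^ 2 + t ^ 2 + 2 * p * (1 - s - t) * s
            + 2 * r * (1 - s - t) * t + 2 * q * s * t) by ring.
    assert (0 < sqrt ((1 - s - t) ^ 2 + s ^ 2 + t ^ 2 + 2 * p * (1 - s - t) * s
                      + 2 * r * (1 - s - t) * t + 2 * q * s * t)) by (apply sqrt_lt_R0; lra).
    split; [lra | split; [apply Rgt_not_eq; repeat apply Rmult_lt_0_compat; lra | exact I]].
Qed.

Lemma is_RInt_subtri_area_deriv w :
  is_RInt (fun s => - subtri_area_deriv p q r w s) 0 1 (2 * atan (w / (1 + p + q + r))).
Proof.
  destruct (subtri_area_endpoints p q r w) as [E1 E0].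
  replace (2 * atan (w / (1 + p + q + r)))
    with (minus (- subtri_area p q r w 1) (- subtri_area p q r w 0))
    by (rewrite E1, E0; unfold minus, plus, opp; simpl; ring).
  apply (@is_RInt_derive R_CompleteNormedModule (fun s => - subtri_area p q r w s));
    rewrite Rmin_left, Rmax_right by lra; intros s Hs;
    pose proof (quad_ab_pos s Hs); pose proof (quad_bc_pos s Hs);
    pose proof (subtri_denom_pos s Hs).
  - apply (is_derive_opp (subtri_area p q r w)); now apply is_derive_subtri_area.
  - apply (continuous_opp (subtri_area_deriv p q r w)); now apply continuous_subtri_area_deriv.
Qed.

Lemma triangle_area_integral w : 0 <= w -> w ^ 2 = cosh_gram p q r ->
  RInt (fun s => RInt (fun t => w / sqrt (tri_quad p q r s t) ^ 3) 0 (1 - s)) 0 1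
  = 2 * atan (w / (1 + p + q + r)).
Proof.
  intros Hw0 Hw.
  destruct (Req_dec w 0) as [-> | Hwnz].
  - rewrite (RInt_ext _ (fun _ => 0)).
    + rewrite RInt_const; unfold Rdiv; rewrite Rmult_0_l, atan_0.
      unfold scal; simpl; unfold mult; simpl; ring.
    + intros s _; rewrite (RInt_ext _ (fun _ => 0)).
      * rewrite RInt_const; unfold scal; simpl; unfold mult; simpl; ring.
      * intros t _; apply Rdiv_0_l.
  - assert (HD : 0 < cosh_gram p q r) by (rewrite <- Hw; apply pow_lt; lra).
    rewrite (RInt_ext _ (fun s => - subtri_area_deriv p q r w s)).
    + apply is_RInt_unique, is_RInt_subtri_area_deriv.
    + intros s Hs; rewrite Rmin_left, Rmax_right in Hs by lra.
      rewrite (is_RInt_unique _ _ _ _ (is_RInt_slice w s Hs HD)).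
      apply slice_integral_eq; auto.
      * apply quad_ab_pos; lra.
      * apply quad_bc_pos; lra.
      * pose proof (subtri_denom_pos s ltac:(lra)).
        apply Rgt_not_eq, Rplus_lt_le_0_compat; [now apply pow_lt|].
        replace ((1 - s) ^ 4 * w ^ 2) with (((1 - s) ^ 2 * w) ^ 2) by ring.
        apply pow2_ge_0.
      * apply slice_discr_neq0; auto; lra.
Qed.

End SliceIntegrals.

(** * The radial parametrisation of a geodesic triangle *)

Lemma is_derive_hnormalize_line (X0 U : V4) (proj : V4 -> R)
  (proj_add : forall u w, proj (vadd u w) = proj u + proj w)
  (proj_scal : forall k u, proj (vscal k u) = k * proj u) s :
  let X := vadd X0 (vscal s U) in
  0 < - mdot X X ->
  is_derive (fun s' => proj (hnormalize (vadd X0 (vscal s' U)))) s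
    (proj U / sqrt (- mdot X X) + proj X * mdot X U / sqrt (- mdot X X) ^ 3).
Proof.
  assert (Eline : forall s', mdot (vadd X0 (vscal s' U)) (vadd X0 (vscal s' U))
                    = mdot X0 X0 + 2 * s' * mdot X0 U + s' ^ 2 * mdot U U)
    by (intros; mdot_expand; rewrite (mdot_sym U X0); ring).
  intros X HX; unfold X in *; rewrite Eline in *.
  apply is_derive_ext with (f := fun s' =>
    / sqrt (- (mdot X0 X0 + 2 * s' * mdot X0 U + s' ^ 2 * mdot U U)) * (proj X0 + s' * proj U)).
  { intros s'; unfold hnormalize; now rewrite proj_scal, proj_add, proj_scal, Eline. }
  rewrite proj_add, proj_scal.
  replace (mdot (vadd X0 (vscal s U)) U) with (mdot X0 U + s * mdot U U) by (mdot_expand; ring).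
  assert (0 < sqrt (- (mdot X0 X0 + 2 * s * mdot X0 U + s ^ 2 * mdot U U)))
    by (apply sqrt_lt_R0; lra).
  auto_derive; replace (s * (s * 1)) with (s ^ 2) by ring.
  - repeat split; lra.
  - field; lra.
Qed.

Lemma Derive_hnormalize_line (X0 U : V4) (g : R -> V4) s :
  (forall s', g s' = vadd X0 (vscal s' U)) ->
  0 < - mdot (g s) (g s) ->
  mkV4 (Derive (fun s' => c0 (hnormalize (g s'))) s)
       (Derive (fun s' => c1 (hnormalize (g s'))) s)
       (Derive (fun s' => c2 (hnormalize (g s'))) s)
       (Derive (fun s' => c3 (hnormalize (g s'))) s)
  = vadd (vscal (/ sqrt (- mdot (g s) (g s))) U)
         (vscal (mdot (g s) U / sqrt (- mdot (g s) (g s)) ^ 3) (g s)).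
Proof.
  intros Hg Hpos.
  assert (HD : forall proj : V4 -> R,
    (forall u w, proj (vadd u w) = proj u + proj w) ->
    (forall k u, proj (vscal k u) = k * proj u) ->
    Derive (fun s' => proj (hnormalize (g s'))) s
    = proj U / sqrt (- mdot (g s) (g s))
      + proj (g s) * mdot (g s) U / sqrt (- mdot (g s) (g s)) ^ 3).
  { intros proj Hadd Hscal.
    rewrite (Derive_ext _ (fun s' => proj (hnormalize (vadd X0 (vscal s' U)))))
      by (intros; now rewrite Hg).
    apply is_derive_unique; rewrite Hg in *.
    now apply is_derive_hnormalize_line. }
  assert (0 < sqrt (- mdot (g s) (g s))) by (apply sqrt_lt_R0; lra).
  apply V4_ext; cbn [c0 c1 c2 c3]; rewrite HD by reflexivity; simpl; field; lra.
Qed.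

Lemma radial_area_element (X U V : V4) :
  0 < - mdot X X ->
  let n := sqrt (- mdot X X) in
  let XU := vadd (vscal (/ n) U) (vscal (mdot X U / n ^ 3) X) in
  let XV := vadd (vscal (/ n) V) (vscal (mdot X V / n ^ 3) X) in
  mdot XU XU * mdot XV XV - (mdot XU XV) ^ 2 = - gram3 X U V / n ^ 6.
Proof.
  intros HX n XU XV.
  assert (Hn : 0 < n) by (apply sqrt_lt_R0; lra).
  assert (HXX : mdot X X = - n ^ 2)
    by (unfold n; rewrite <- Rsqr_pow2, Rsqr_sqrt; lra).
  unfold XU, XV, gram3, det3; mdot_expand.
  rewrite ?(mdot_sym U X), ?(mdot_sym V X), ?(mdot_sym V U), HXX.
  field; lra.
Qed.

Definition tri_point (a b c : V4) (s t : R) : V4 :=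
  vadd (vscal (1 - s - t) a) (vadd (vscal s b) (vscal t c)).

Lemma d_s_eq a b c s t :
  let X := tri_point a b c s t in
  0 < - mdot X X ->
  d_s a b c s t = vadd (vscal (/ sqrt (- mdot X X)) (vsub b a))
                       (vscal (mdot X (vsub b a) / sqrt (- mdot X X) ^ 3) X).
Proof.
  intros X HX.
  apply (Derive_hnormalize_line (tri_point a b c 0 t) (vsub b a) (fun s' => tri_point a b c s' t));
    [intros; apply V4_ext; simpl; ring | exact HX].
Qed.

Lemma d_t_eq a b c s t :
  let X := tri_point a b c s t in
  0 < - mdot X X ->
  d_t a b c s t = vadd (vscal (/ sqrt (- mdot X X)) (vsub c a))
                       (vscal (mdot X (vsub c a) / sqrt (- mdot X X) ^ 3) X).
Proof.
  intros X HX.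
  apply (Derive_hnormalize_line (tri_point a b c s 0) (vsub c a) (fun t' => tri_point a b c s t'));
    [intros; apply V4_ext; simpl; ring | exact HX].
Qed.

(** * The geodesic triangle *)

Section Triangle.
Variables a b c : V4.
Hypotheses (Ha : inH3 a) (Hb : inH3 b) (Hc : inH3 c).

Let p := - mdot a b.
Let q := - mdot b c.
Let r := - mdot a c.

Lemma triangle_coshs_ge1 : 1 <= p /\ 1 <= q /\ 1 <= r.
Proof. repeat split; apply H3_neg_mdot_ge1; assumption. Qed.

Let Eaa : mdot a a = -1. Proof. apply Ha. Qed.
Let Ebb : mdot b b = -1. Proof. apply Hb. Qed.
Let Ecc : mdot c c = -1. Proof. apply Hc. Qed.
Let Eab : mdot a b = - p. Proof. unfold p; ring. Qed.
Let Ebc : mdot b c = - q. Proof. unfold q; ring. Qed.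
Let Eac : mdot a c = - r. Proof. unfold r; ring. Qed.

Ltac vertex_gram :=
  mdot_expand; rewrite ?(mdot_sym b a), ?(mdot_sym c a), ?(mdot_sym c b);
  rewrite ?Eaa, ?Ebb, ?Ecc, ?Eab, ?Ebc, ?Eac.

Lemma cosh_gram_nonneg : 0 <= cosh_gram p q r.
Proof.
  set (u := vadd b (vscal (- p) a)); set (w := vadd c (vscal (- r) a)).
  assert (Hu : tangent a u) by (unfold tangent, u; vertex_gram; ring).
  assert (Hw : tangent a w) by (unfold tangent, w; vertex_gram; ring).
  replace (cosh_gram p q r) with (mdot u u * mdot w w - (mdot u w) ^ 2)
    by (unfold u, w, cosh_gram, det3; vertex_gram; ring).
  pose proof (tangent_cauchy_schwarz a Ha u w Hu Hw); lra.
Qed.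

Lemma tri_point_mdot s t :
  - mdot (tri_point a b c s t) (tri_point a b c s t) = tri_quad p q r s t.
Proof. unfold tri_point, tri_quad; vertex_gram; ring. Qed.

Lemma area_density_eq s t : 0 <= s -> 0 <= t -> s + t <= 1 ->
  area_density a b c s t = sqrt (cosh_gram p q r) / sqrt (tri_quad p q r s t) ^ 3.
Proof.
  intros Hs Ht Hst.
  destruct triangle_coshs_ge1 as (Hp & Hq & Hr).
  pose proof (tri_quad_ge1 p q r Hp Hq Hr s t Hs Ht Hst) as HQ.
  rewrite <- tri_point_mdot in HQ |- *.
  unfold area_density; rewrite d_s_eq, d_t_eq by lra.
  rewrite radial_area_element by lra.
  set (X := tri_point a b c s t) in *.
  replace (gram3 X (vsub b a) (vsub c a)) with (- cosh_gram p q r)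
    by (unfold X, tri_point, gram3, cosh_gram, det3; vertex_gram; ring).
  assert (0 < sqrt (- mdot X X)) by (apply sqrt_lt_R0; lra).
  rewrite Ropp_involutive, sqrt_div_alt by (apply pow_lt; lra).
  replace 6%nat with (3 * 2)%nat by reflexivity.
  rewrite pow_mult, sqrt_pow2; [reflexivity|].
  apply pow_le; lra.
Qed.

Lemma tri_area_eq :
  tri_area a b c = 2 * atan (sqrt (cosh_gram p q r) / (1 + p + q + r)).
Proof.
  destruct triangle_coshs_ge1 as (Hp & Hq & Hr).
  unfold tri_area.
  rewrite <- (triangle_area_integral p q r Hp Hq Hr) by
    (apply sqrt_pos || (rewrite <- Rsqr_pow2; apply Rsqr_sqrt, cosh_gram_nonneg; assumption)).
  apply RInt_ext; intros s Hs; rewrite Rmin_left, Rmax_right in Hs by lra.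
  apply RInt_ext; intros t Ht; rewrite Rmin_left, Rmax_right in Ht by lra.
  apply area_density_eq; lra.
Qed.

Section Holonomy.
Variable va : V4.
Hypotheses (Hta : tangent a va) (Hva : mdot va va = 1).

Definition holonomy_defect : V4 :=
  vsub (ptransport a b va) (ptransport c b (ptransport a c va)).

Lemma holonomy_defect_tangent : tangent b holonomy_defect.
Proof. apply tangent_vsub; apply ptransport_tangent; assumption. Qed.

Lemma holonomy_defect_sq :
  mdot holonomy_defect holonomy_defect * ((1 + p + q + r) ^ 2 + cosh_gram p q r)
  = 4 * (cosh_gram p q r + gram4 a b c va).
Proof.
  destruct triangle_coshs_ge1 as (Hp & Hq & Hr).
  unfold holonomy_defect, ptransport, gram4, cosh_gram, det4, det3; vertex_gram.
  unfold tangent in Hta.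
  rewrite ?(mdot_sym va a), ?(mdot_sym va b), ?(mdot_sym va c), Hta, Hva.
  field; lra.
Qed.

Lemma tnorm_holonomy_defect_le :
  tnorm holonomy_defect <= 2 * atan (sqrt (cosh_gram p q r) / (1 + p + q + r)).
Proof.
  destruct triangle_coshs_ge1 as (Hp & Hq & Hr).
  pose proof cosh_gram_nonneg as HD.
  pose proof holonomy_defect_sq as Hsq.
  pose proof (gram4_nonpos a b c va).
  set (D := cosh_gram p q r) in *; set (S := 1 + p + q + r) in *.
  assert (HS : 0 < S) by (unfold S; lra).
  set (t := sqrt D / S).
  assert (Ht : 0 <= t).
  { unfold t, Rdiv; apply Rmult_le_pos; [apply sqrt_pos | apply Rlt_le, Rinv_0_lt_compat; lra]. }
  pose proof (atan_nonneg t Ht).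
  assert (HE : mdot holonomy_defect holonomy_defect <= 4 * (t ^ 2 / (1 + t ^ 2))).
  { replace (4 * (t ^ 2 / (1 + t ^ 2))) with (4 * D / (S ^ 2 + D)).
    - apply Rmult_le_reg_r with (S ^ 2 + D); [nra|].
      unfold Rdiv; rewrite Rmult_assoc, Rinv_l; nra.
    - assert (Hw : sqrt D ^ 2 = D) by (rewrite <- Rsqr_pow2; now apply Rsqr_sqrt).
      replace (t ^ 2) with (D / S ^ 2)
        by (unfold t, Rdiv; rewrite Rpow_mult_distr, Hw, pow_inv; ring).
      field; split; nra. }
  pose proof (Rsqr_sin_atan_le t Ht).
  unfold tnorm; rewrite <- (sqrt_pow2 (2 * atan t)) by lra.
  apply sqrt_le_1_alt; lra.
Qed.

End Holonomy.
End Triangle.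

Theorem lemma4 (a b c va vb : V4) :
  inH3 a -> inH3 b -> inH3 c ->
  tangent a va -> mdot va va = 1 ->
  tangent b vb -> mdot vb vb = 1 ->
  tnorm (vsub (ptransport a b va) vb)
    <= tri_area a b c
       + tnorm (vsub (ptransport a c va) (ptransport b c vb)).
Proof.
  intros Ha Hb Hc Hta Hva Htb _.
  set (u := ptransport a c va).
  assert (Hu : tangent c u) by (apply ptransport_tangent; assumption).
  assert (Hvb : tangent c (ptransport b c vb)) by (apply ptransport_tangent; assumption).
  rewrite (vsub_split _ _ (ptransport c b u)).
  replace (vsub (ptransport c b u) vb) with (ptransport c b (vsub u (ptransport b c vb)))
    by (rewrite ptransport_vsub, ptransport_inverse; auto).
  eapply Rle_trans.
  { apply (tnorm_triangle b Hb).
    - exact (holonomy_defect_tangent a b c Ha Hb Hc va).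
    - apply ptransport_tangent; assumption. }
  rewrite tnorm_ptransport by (auto using tangent_vsub).
  apply Rplus_le_compat_r.
  rewrite tri_area_eq by assumption.
  exact (tnorm_holonomy_defect_le a b c Ha Hb Hc va Hta Hva).
Qed.
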